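(* Let $d\leq n$ be natural numbers. Suppose $A\subseteq 2^{[n]}$ satisfies $\mathsf{VC\text{-}dim}(\{S\triangle T \mid S,T\in A\})\leq d$. Then \[ |A| \leq 2\binom{n}{\leq \lfloor d/2\rfloor}. \]
   Context: $[n]=\{1,\dots,n\}$ and $2^{[n]}$ is the family of all subsets of $[n]$; $\triangle$ denotes symmetric difference. For a family $B\subseteq 2^{[n]}$, $\mathsf{VC\text{-}dim}(B)$ is the size of the largest $Y\subseteq[n]$ such that $\{S\cap Y \mid S\in B\}=2^{Y}$. The notation $\binom{n}{\leq k}$ means $\sum_{i=0}^{k}\binom{n}{i}$. *)

From mathcomp Require Import all_boot.
Set Implicit Arguments. Unset Strict Implicit. Unset Printing Implicit Defensive.

(* Ground set [n] is represented by 'I_n; subsets of [n] are {set 'I_n}. *)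
Definition symdiff (T : finType) (S U : {set T}) : {set T} := (S :\: U) :|: (U :\: S).

Definition symdiff_family (T : finType) (A : {set {set T}}) : {set {set T}} :=
  [set symdiff S U | S in A, U in A].

Definition shatters (T : finType) (B : {set {set T}}) (Y : {set T}) : bool :=
  [set S :&: Y | S in B] == powerset Y.

Definition vc_dim_le (T : finType) (B : {set {set T}}) (d : nat) : bool :=
  [forall Y : {set T}, shatters B Y ==> (#|Y| <= d)].

Definition binom_le (n k : nat) : nat := \sum_(0 <= i < k.+1) 'C(n, i).

(* Over F_2 the identity matrix on A is [S == T] = f (S (+) T), where f is the
   indicator of the empty set on the family B = {S (+) T | S, T in A}.  Every
   function on B agrees with a multilinear polynomial sum_Y c_Y x^Y whose
   monomials Y are shattered by B, hence have |Y| <= d <= 2k + 1 with k = d/2.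
   Expanding [Y <= S (+) T] = sum_(V <= Y) [V <= S] [Y \ V <= T] mod 2 and
   sending each V to whichever of V, Y \ V has at most k elements writes the
   identity matrix as a sum of two products through the sets of size <= k,
   so |A| <= 2 binom(n, <= k) by a rank count. *)

From mathcomp Require Import all_boot all_algebra zify.
Import GRing.Theory.
Set Implicit Arguments. Unset Strict Implicit. Unset Printing Implicit Defensive.

Section Shattering.
Variable T : finType.
Implicit Types (i : T) (X Y Z S : {set T}) (B : {set {set T}}).

Definition proj i B := [set X :\ i | X in B].
Definition twins i B := [set Z in B | (i \notin Z) && (i |: Z \in B)].

Lemma shattersP B Y :
  reflect (forall Z, Z \subset Y -> exists2 S, S \in B & S :&: Y = Z) (shatters B Y).
Proof.
rewrite /shatters eqEsubset.
have -> : [set S :&: Y | S in B] \subset powerset Y.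
  by apply/subsetP => _ /imsetP[S _ ->]; rewrite powersetE subsetIr.
apply: (iffP subsetP) => [sub Z sZY | sh Z].
- by move: (sub Z); rewrite powersetE => /(_ sZY) /imsetP[S SB ->]; exists S.
- by rewrite powersetE => /sh[S SB <-]; apply: imset_f.
Qed.

Lemma shatters_sub_mem B Y : shatters B Y -> exists2 S, S \in B & Y \subset S.
Proof. by move/shattersP/(_ Y (subxx Y)) => [S SB <-]; exists S; rewrite ?subsetIl. Qed.

Lemma shatters_proj i B Y : shatters (proj i B) Y -> i \notin Y /\ shatters B Y.
Proof.
move=> sh; have iNY : i \notin Y.
  have [_ /imsetP[X _ ->] /subsetP sYX] := shatters_sub_mem sh.
  by apply/negP => /sYX; rewrite setD11.
split=> //; apply/shattersP => Z sZY.
have [_ /imsetP[X XB ->] <-] := shattersP _ _ sh Z sZY.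
exists X => //; apply/setP => x; rewrite !inE.
by case: eqP => // ->; rewrite (negbTE iNY) !andbF.
Qed.

Lemma shatters_twins i B Y : shatters (twins i B) Y -> i \notin Y /\ shatters B (i |: Y).
Proof.
move=> sh; have iNY : i \notin Y.
  have [S] := shatters_sub_mem sh; rewrite inE => /and3P[_ iNS _] /subsetP sYS.
  by apply: contra iNS => /sYS.
split=> //; apply/shattersP => Z sZiY.
have sZY : Z :\ i \subset Y by rewrite subDset.
have [S] := shattersP _ _ sh _ sZY; rewrite inE => /and3P[SB iNS iSB] SYZ.
exists (if i \in Z then i |: S else S); first by case: ifP.
apply/setP => x; move/setP/(_ x): SYZ; case: ifP => iZ; rewrite !inE;
  by case: (x =P i) => [->|/eqP xi] /=; rewrite ?iZ ?(negbTE iNS) ?(negbTE xi).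
Qed.

End Shattering.

Section Interpolation.
Variables (T : finType) (R : pzRingType).
Local Open Scope ring_scope.
Implicit Types (i : T) (X Y Z : {set T}) (B : {set {set T}}) (c p q : {set T} -> R).

(* [poly_at c X] is the multilinear polynomial [sum_Y c Y * prod_(y in Y) x_y]
   evaluated at the indicator vector of [X]. *)
Definition poly_at c X : R := \sum_Y c Y * (Y \subset X)%:R.

(* Multiplication by [x_i] of a polynomial in which [x_i] does not occur. *)
Definition mulX i c Y : R := if i \in Y then c (Y :\ i) else 0.

Lemma poly_atD p q X : poly_at (p \+ q) X = poly_at p X + poly_at q X.
Proof. by rewrite -big_split; apply: eq_bigr => Y _; rewrite mulrDl. Qed.

Lemma poly_at_setD1 i c X :
  (forall Y, c Y != 0 -> i \notin Y) -> poly_at c (X :\ i) = poly_at c X.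
Proof.
move=> ci; apply: eq_bigr => Y _.
by have [-> | /ci iNY] := eqVneq (c Y) 0; rewrite ?mul0r // subsetD1 iNY andbT.
Qed.

Lemma poly_at_mulX i c X : (forall Y, c Y != 0 -> i \notin Y) ->
  poly_at (mulX i c) X = if i \in X then poly_at c X else 0.
Proof.
move=> ci; rewrite /poly_at /mulX.
have avoid_i (G : {set T} -> R) :
    \sum_(Z : {set T} | i \notin Z) c Z * G Z = \sum_(Z : {set T}) c Z * G Z.
  rewrite [RHS](bigID (fun Z : {set T} => i \notin Z)) /= [s in _ + s]big1 ?addr0 // => Z.
  by have [-> | /ci ->] := eqVneq (c Z) 0; rewrite ?mul0r.
rewrite (bigID (fun Y : {set T} => i \in Y)) /= [s in _ + s]big1 ?addr0; last first.
  by move=> Y /negbTE ->; rewrite mul0r.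
rewrite (reindex_onto (fun Z => i |: Z) (fun Y : {set T} => Y :\ i)) /=; last first.
  by move=> Y; apply: setD1K.
have -> : \sum_(Z : {set T} | (i \in i |: Z) && ((i |: Z) :\ i == Z))
    (if i \in i |: Z then c ((i |: Z) :\ i) else 0) * (i |: Z \subset X)%:R =
  \sum_(Z : {set T} | i \notin Z) c Z * ((i \in X) && (Z \subset X))%:R.
  apply: eq_big => [Z | Z /andP[_ /eqP ->]]; last by rewrite setU11 subUset sub1set.
  by rewrite setU11; apply/eqP/idP => [<- | /setU1K //]; rewrite setD11.
case: ifP => iX /=; first exact: (avoid_i (fun Z => (Z \subset X)%:R)).
by rewrite big1 // => Z _; rewrite mulr0.
Qed.

Lemma poly_interpolation_step i B f p q :
  (forall Y, p Y != 0 -> shatters (proj i B) Y) ->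
  (forall Y, q Y != 0 -> shatters (twins i B) Y) ->
  {in twins i B, (fun Z => f (i |: Z) - f Z) =1 poly_at q} ->
  {in proj i B, (fun Z => if Z \in B then f Z else f (i |: Z) - poly_at q Z)
     =1 poly_at p} ->
  (forall Y, (p \+ mulX i q) Y != 0 -> shatters B Y) /\
  {in B, f =1 poly_at (p \+ mulX i q)}.
Proof.
move=> p_sh q_sh q_f p_f.
have pNi Y : p Y != 0 -> i \notin Y by move/p_sh/shatters_proj => [].
have qNi Y : q Y != 0 -> i \notin Y by move/q_sh/shatters_twins => [].
split=> [Y | X XB].
  rewrite /mulX /=; have [-> | /p_sh/shatters_proj[] //] := eqVneq (p Y) 0.
  rewrite add0r; case: ifP => [iY | _]; last by rewrite eqxx.
  by move/q_sh/shatters_twins => [_]; rewrite setD1K.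
rewrite poly_atD poly_at_mulX // -(poly_at_setD1 X pNi) -(poly_at_setD1 X qNi).
rewrite -p_f /=; last exact: imset_f.
have [iX | iNX] := boolP (i \in X); last first.
  have XiX : X :\ i = X by apply/setDidPl; rewrite disjoint_sym disjoints1.
  by rewrite XiX XB addr0.
case: ifP => XiB; last by rewrite setD1K // subrK.
rewrite -q_f /=; first by rewrite (setD1K iX) addrC subrK.
by rewrite inE XiB setD11 (setD1K iX).
Qed.

Lemma poly_interpolation_shattered B f :
  exists2 c, (forall Y, c Y != 0 -> shatters B Y) & {in B, f =1 poly_at c}.
Proof.
have [m] := ubnP #|cover B|; elim: m B f => // m IH B f; rewrite ltnS => le_cover_m.
have [cover0 | [i iB]] := set_0Vmem (cover B).
  have [-> | [X0 X0B]] := set_0Vmem B.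
    by exists (fun => 0) => [Y | X]; rewrite ?eqxx ?inE.
  exists (fun Y => if Y == set0 then f set0 else 0).
    move=> Y; case: ifP => [/eqP -> _ | _]; last by rewrite eqxx.
    by apply/shattersP => Z; rewrite subset0 => /eqP ->; exists X0; rewrite ?setI0.
  move=> X XB; have /eqP -> : X == set0 by rewrite -subset0 -cover0 bigcup_sup.
  rewrite /poly_at (bigD1 set0) //= eqxx sub0set mulr1 big1 ?addr0 // => Y.
  by move=> /negbTE ->; rewrite mul0r.
have shrink B' : cover B' \subset cover B :\ i -> (#|cover B'| < m)%N.
  move=> /subset_leq_card le_cover; apply: leq_trans le_cover_m.
  by rewrite (cardsD1 i (cover B)) iB add1n ltnS.
have cover_twins : cover (twins i B) \subset cover B :\ i.
  apply/bigcupsP => Z; rewrite inE => /and3P[ZB iNZ _].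
  by rewrite subsetD1 iNZ bigcup_sup.
have cover_proj : cover (proj i B) \subset cover B :\ i.
  by apply/bigcupsP => _ /imsetP[X XB ->]; rewrite setSD ?bigcup_sup.
have [q q_sh q_f] := IH (twins i B) (fun Z => f (i |: Z) - f Z) (shrink _ cover_twins).
have [p p_sh p_f] := IH (proj i B)
  (fun Z => if Z \in B then f Z else f (i |: Z) - poly_at q Z) (shrink _ cover_proj).
have [c_sh c_f] := poly_interpolation_step p_sh q_sh q_f p_f.
by exists (p \+ mulX i q).
Qed.

End Interpolation.

Lemma prodr_natb (R : comPzSemiRingType) (I : finType) (P : pred I) :
  (\prod_i (P i)%:R = [forall i, P i]%:R :> R)%R.
Proof.
have [all_P | /forallPn[i NPi]] := boolP [forall i, P i].
  by rewrite big1 // => i _; rewrite (forallP all_P).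
by rewrite (bigD1 i) //= (negbTE NPi) mul0r.
Qed.

Section Subsets.
Variable T : finType.
Implicit Types (k : nat) (S U V Y : {set T}).
Local Open Scope ring_scope.

Definition sets_le k := [set V : {set T} | (#|V| <= k)%N].

Lemma mem_sets_le k V : (V \in sets_le k) = (#|V| <= k)%N.
Proof. by rewrite inE. Qed.

Lemma card_sets_le k : #|sets_le k| = binom_le #|T| k.
Proof.
rewrite /sets_le; elim: k => [|k IH].
  rewrite /binom_le big_nat1 bin0 -(cards1 (@set0 T)); apply: eq_card => V.
  by rewrite !inE leqn0 cards_eq0.
rewrite /binom_le big_nat_recr //= -/(binom_le _ k) -IH -card_draws.
rewrite -(cardsID [set V : {set T} | (#|V| <= k)%N] [set V : {set T} | (#|V| <= k.+1)%N]).
congr (_ + _)%N; apply: eq_card => V; rewrite !inE.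
  by rewrite andb_idl // => /leqW.
by rewrite -ltnNge eqn_leq andbC.
Qed.

Lemma symdiff_eq0 S U : (symdiff S U == set0) = (S == U).
Proof. by rewrite /symdiff setU_eq0 !setD_eq0 eqEsubset. Qed.

Lemma sum_subsets_parity Y S U :
  \sum_(V : {set T} | V \subset Y)
    ((V \subset S)%:R * (Y :\: V \subset U)%:R : 'F_2) =
  (Y \subset symdiff S U)%:R.
Proof.
have subsets_forall V : [&& V \subset Y, V \subset S & Y :\: V \subset U] =
    [forall x, if x \in V then (x \in Y) && (x \in S) else (x \in Y) ==> (x \in U)].
  apply/and3P/forallP => [[/subsetP VY /subsetP VS /subsetP YU] x | all_x].
    case: ifP => xV; first by rewrite VY ?VS.
    by apply/implyP => xY; apply: YU; rewrite !inE xV.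
  split; apply/subsetP => x; have := all_x x; rewrite ?inE.
  - by move=> + xV; rewrite xV => /andP[].
  - by move=> + xV; rewrite xV => /andP[].
  - by case: (x \in V) => // /implyP + /andP[_ xY]; apply.
have sub_forall : (Y \subset symdiff S U) = [forall x, (x \in Y) ==> (x \in symdiff S U)].
  by apply/subsetP/forallP => sub x; [apply/implyP/sub | apply/implyP/sub].
rewrite sub_forall -prodr_natb (eq_bigr (fun x =>
  ((x \in Y) && (x \in S))%:R + ((x \in Y) ==> (x \in U))%:R)); last first.
  by move=> x _; rewrite !inE; case: (x \in Y); case: (x \in S); case: (x \in U); apply/eqP.
rewrite bigA_distr big_mkcond; apply: eq_bigr => V _.
transitivity (\prod_x ((if x \in V then (x \in Y) && (x \in S)
                         else (x \in Y) ==> (x \in U))%:R : 'F_2)).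
  rewrite prodr_natb -subsets_forall.
  by case: (V \subset Y); case: (V \subset S); case: (Y :\: V \subset U); apply/eqP.
by apply: eq_bigr => x _; case: ifP.
Qed.

Lemma sum_subsets_split (R : nmodType) k Y (g : {set T} -> {set T} -> R) :
  (#|Y| <= k.*2.+1)%N ->
  \sum_(V : {set T} | V \subset Y) g V (Y :\: V) =
    \sum_(V : {set T} | (V \subset Y) && (#|V| <= k)%N) g V (Y :\: V) +
    \sum_(V : {set T} | [&& V \subset Y, #|V| <= k & k < #|Y :\: V|]%N)
       g (Y :\: V) V.
Proof.
move=> cardY; rewrite (bigID (fun V : {set T} => #|V| <= k)%N) /=; congr (_ + _).
have YDDV V : Y :\: (Y :\: V) = Y :&: V by rewrite setDDr setDv set0U.
rewrite (reindex_onto (fun V => Y :\: V) (fun V => Y :\: V)) /=; last first.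
  by move=> V /andP[VY _]; rewrite YDDV; apply/setIidPr.
apply: eq_big => [V | V /andP[_ /eqP VE]]; last by rewrite VE.
rewrite subsetDl YDDV -ltnNge /=; apply/andP/and3P => [[kY /eqP/setIidPr VY] | [VY _ kY]].
  split=> //; move: kY; rewrite cardsDS //; lia.
by split=> //; apply/eqP/setIidPr.
Qed.

Lemma poly_at_symdiff k (c : {set T} -> 'F_2) S U :
  (forall Y, c Y != 0 -> (#|Y| <= k.*2.+1)%N) ->
  poly_at c (symdiff S U) =
    \sum_(V in sets_le k)
       (V \subset S)%:R * \sum_(Y : {set T} | V \subset Y) c Y * (Y :\: V \subset U)%:R +
    \sum_(V in sets_le k)
       (\sum_(Y : {set T} | (V \subset Y) && (k < #|Y :\: V|)%N)
          c Y * (Y :\: V \subset S)%:R) *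
       (V \subset U)%:R.
Proof.
move=> c_small.
have split_Y Y : c Y * (Y \subset symdiff S U)%:R =
    \sum_(V : {set T} | (V \subset Y) && (#|V| <= k)%N)
       c Y * ((V \subset S)%:R * (Y :\: V \subset U)%:R) +
    \sum_(V : {set T} | [&& V \subset Y, #|V| <= k & k < #|Y :\: V|]%N)
       c Y * ((Y :\: V \subset S)%:R * (V \subset U)%:R).
  have [-> | /c_small cardY] := eqVneq (c Y) 0.
    by rewrite mul0r !big1 ?addr0 // => V _; rewrite mul0r.
  rewrite -!mulr_sumr -mulrDr -sum_subsets_parity.
  by rewrite (sum_subsets_split (fun V W => (V \subset S)%:R * (W \subset U)%:R) cardY).
rewrite /poly_at (eq_bigr _ (fun Y _ => split_Y Y)) big_split /=.
rewrite (exchange_big_dep (fun V => V \in sets_le k)); last first.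
  by move=> Y V _ /andP[_]; rewrite mem_sets_le.
rewrite [s in _ + s](exchange_big_dep (fun V => V \in sets_le k)); last first.
  by move=> Y V _ /and3P[_]; rewrite mem_sets_le.
congr (_ + _); apply: eq_bigr => V; rewrite mem_sets_le => cardV.
  rewrite mulr_sumr; apply: eq_big => [Y | Y _]; first by rewrite cardV andbT.
  by rewrite mulrCA.
rewrite mulr_suml; apply: eq_big => [Y | Y _]; first by rewrite cardV.
by rewrite mulrA.
Qed.

End Subsets.

Section RankBound.
Variable F : fieldType.
Local Open Scope ring_scope.

Lemma card_le_factor (I J : finType) (A : {set I}) (K : {set J})
    (a : I -> J -> F) (b : J -> I -> F) :
  {in A &, forall s t, (s == t)%:R = \sum_(j in K) a s j * b j t} -> (#|A| <= #|K|)%N.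
Proof.
move=> factor.
pose P := \matrix_(s < #|A|, j < #|K|) a (enum_val s) (enum_val j).
pose Q := \matrix_(j < #|K|, t < #|A|) b (enum_val j) (enum_val t).
have PQ1 : P *m Q = 1%:M.
  apply/matrixP => s t; rewrite !mxE -(inj_eq enum_val_inj) factor ?enum_valP //.
  by rewrite [RHS]big_enum_val; apply: eq_bigr => j _; rewrite !mxE.
by rewrite -(mxrank1 F #|A|) -PQ1 (leq_trans (mxrankM_maxl _ _)) ?rank_leq_col.
Qed.

Lemma card_le_factor2 (I J : finType) (A : {set I}) (K : {set J})
    (a1 a2 : I -> J -> F) (b1 b2 : J -> I -> F) :
  {in A &, forall s t, (s == t)%:R =
    \sum_(j in K) a1 s j * b1 j t + \sum_(j in K) a2 s j * b2 j t} ->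
  (#|A| <= 2 * #|K|)%N.
Proof.
move=> factor; rewrite -[2%N]card_bool -cardsT -cardsX.
apply: (card_le_factor (a := fun s j => if j.1 then a1 s j.2 else a2 s j.2)
  (b := fun j t => if j.1 then b1 j.2 t else b2 j.2 t)) => s t sA tA.
rewrite factor // (eq_bigl (fun j => predT j.1 && (j.2 \in K))); last first.
  by move=> [x y]; rewrite !inE.
pose G (x : bool) j := (if x then a1 s j else a2 s j) * (if x then b1 j t else b2 j t).
by rewrite -(pair_big predT (mem K) G) big_bool.
Qed.

End RankBound.

Theorem theorem1p2 (n d : nat) (A : {set {set 'I_n}}) :
  d <= n ->
  vc_dim_le (symdiff_family A) d ->
  #|A| <= 2 * binom_le n d./2.
Proof.
move=> _ vc_d; set k := d./2.
have d_le : d <= k.*2.+1.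
  by rewrite -[d in d <= _]odd_double_half addnC -addn1 leq_add2l leq_b1.
have [c c_sh c_f] :=
  poly_interpolation_shattered (symdiff_family A) (fun X => (X == set0)%:R : 'F_2)%R.
have c_small Y : c Y != 0%R -> #|Y| <= k.*2.+1.
  by move/c_sh; move/forallP/(_ Y)/implyP: vc_d => vc /vc /leq_trans; apply.
rewrite -[n in binom_le n]card_ord -card_sets_le.
apply: (card_le_factor2 (F := 'F_2)) => S U SA UA.
rewrite -symdiff_eq0 c_f; last exact: imset2_f.
exact: poly_at_symdiff.
Qed.
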